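(* Let $3\le a<b$ be integers and for $z\in(0,1)$ let $$\tilde T(z)=\frac{\frac{z}{1-z}Z_0(z)+\ln(1-z)\,Z_1(z)}{a\,b\,(b-a)\,z^{a+b-2}},\qquad Z_j(z)=a(a-1)^j z^{a-1}-b(b-1)^jz^{b-1}.$$ (Wherever $h(z)\ne0$ and $z\neq z_r$, $\tilde T(z)=T(z,1/h(z))$ is the value of the threshold function at the critical point with $\alpha=1/h(z)$.) Then for all $z\in(0,z')$: $\tilde T'(z)>0\iff g(z)>0$; and for all $z\in(z',1)$: $\tilde T'(z)<0\iff g(z)>0$, where $z'=(a/b)^{1/(b-a)}$.
   Context: $T(z,\alpha)=\frac{-\ln(1-z)}{\alpha a z^{a-1}+(1-\alpha)bz^{b-1}}$. $f(z)=\frac{-\ln(1-z)(1-z)}{z}$, $g(z)=f(z)(b-1)(a-1)+\frac1{1-z}+2-b-a$, $h(z)=\frac{a z^{a-b}-b-f(z)(a(a-1)z^{a-b}-b(b-1))}{b((b-1)f(z)-1)}$; $z_r$ is the unique $z\in(0,1)$ with $f(z)=\frac1{b-1}$. *)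

From Stdlib Require Import Reals Lra Lia.
Open Scope R_scope.

Definition f_fun (z : R) : R := - ln (1 - z) * (1 - z) / z.

Definition g_fun (a b : nat) (z : R) : R :=
  f_fun z * (INR b - 1) * (INR a - 1) + / (1 - z) + 2 - INR b - INR a.

Definition Z_fun (a b j : nat) (z : R) : R :=
  INR a * (INR a - 1) ^ j * z ^ (a - 1) - INR b * (INR b - 1) ^ j * z ^ (b - 1).

Definition Ttilde (a b : nat) (z : R) : R :=
  (z / (1 - z) * Z_fun a b 0 z + ln (1 - z) * Z_fun a b 1 z)
  / (INR a * INR b * (INR b - INR a) * z ^ (a + b - 2)).

Definition z_prime (a b : nat) : R := Rpower (INR a / INR b) (/ INR (b - a)).

From Stdlib Require Import Reals Lra Lia.
From Coquelicot Require Import Coquelicot.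
Open Scope R_scope.

(* The proof has two independent ingredients.
   1. A closed form for the derivative: with D(z) = a b (b-a) z^(a+b-2) the
      denominator of T~, direct differentiation gives
          T~'(z) = Z_0(z) g(z) / ((1-z) D(z))     for 0 < z < 1;
      this is a field identity once the derivatives are computed.
   2. The sign of Z_0: factoring Z_0(z) = z^(a-1) (a - b z^(b-a)) and using
      z'^(b-a) = a/b gives Z_0(z) = b z^(a-1) (z'^(b-a) - z^(b-a)), which is
      positive on (0,z') and negative on (z',1), since t |-> t^(b-a) is
      strictly increasing on [0,oo).
   As (1-z) D(z) > 0 on (0,1), the sign of T~' is the sign of Z_0 g, and the
   theorem follows by a case split on the side of z' on which z lies. *)

Definition T_den (a b : nat) (z : R) : R :=
  INR a * INR b * (INR b - INR a) * z ^ (a + b - 2).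

Lemma T_den_pos (a b : nat) (z : R) :
  (1 <= a)%nat -> (a < b)%nat -> 0 < z -> 0 < T_den a b z.
Proof.
intros ha hab hz.
assert (0 < INR a) by (apply lt_0_INR; lia).
assert (INR a < INR b) by (apply lt_INR; lia).
assert (0 < z ^ (a + b - 2)) by (apply pow_lt; lra).
unfold T_den; repeat apply Rmult_lt_0_compat; lra.
Qed.

Lemma Ttilde_derivative (a b : nat) (z : R) :
  (2 <= a)%nat -> (a < b)%nat -> 0 < z < 1 ->
  derivable_pt_lim (Ttilde a b) z
    (Z_fun a b 0 z * g_fun a b z / ((1 - z) * T_den a b z)).
Proof.
intros ha hab hz.
(* Write a = m+2, b = k+2, so that every exponent is a successor and the
   derivative of z^(S m) is (m+1) z^m: then the final identity is one that
   [field] can check, with z^m and z^k as atoms. *)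
destruct (Nat.le_exists_sub 2 a ha) as [m [-> _]].
destruct (Nat.le_exists_sub 2 b ltac:(lia)) as [k [-> _]].
assert (hmk : INR m < INR k) by (apply lt_INR; lia).
assert (hm : 0 <= INR m) by apply pos_INR.
assert (hzm : z ^ m <> 0) by (apply pow_nonzero; lra).
assert (hzk : z ^ k <> 0) by (apply pow_nonzero; lra).
apply is_derive_Reals.
unfold Ttilde, T_den, Z_fun, g_fun, f_fun.
replace (m + 2 - 1)%nat with (S m) by lia.
replace (k + 2 - 1)%nat with (S k) by lia.
replace (m + 2 + (k + 2) - 2)%nat with (S (S (m + k))) by lia.
rewrite !plus_INR.
remember (S m) as p eqn:hp. remember (S k) as q eqn:hq.
remember (S (S (m + k))) as r eqn:hr.
auto_derive.
- assert (z ^ r <> 0) by (apply pow_nonzero; lra).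
  repeat split; try lra.
  repeat apply Rmult_integral_contrapositive_currified; (lra || auto).
- subst p q r. cbn [pow Nat.pred]. rewrite !pow_add, !S_INR, plus_INR. simpl INR.
  replace (1 + - z) with (1 - z) by ring.
  field. repeat split; lra || auto.
Qed.

Lemma pow_lt_compat (x y : R) (n : nat) :
  0 <= x < y -> (0 < n)%nat -> x ^ n < y ^ n.
Proof.
intros hxy hn; destruct n as [|n]; [lia|].
assert (x ^ n <= y ^ n) by (apply pow_incr; lra).
assert (0 < y ^ n) by (apply pow_lt; lra).
assert (0 <= x ^ n) by (apply pow_le; lra).
simpl; nra.
Qed.

Lemma Rpower_root_pow (q : R) (n : nat) :
  0 < q -> (0 < n)%nat -> Rpower q (/ INR n) ^ n = q.
Proof.
intros hq hn.
rewrite <- Rpower_pow by apply exp_pos.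
rewrite Rpower_mult, Rinv_l by (apply not_0_INR; lia).
apply Rpower_1; exact hq.
Qed.

(* For 0 < q < 1 the root q^(1/n) lies in (0,1), as roots >= 1 have
   n-th powers >= 1. *)
Lemma Rpower_root_bounds (q : R) (n : nat) :
  0 < q < 1 -> (0 < n)%nat -> 0 < Rpower q (/ INR n) < 1.
Proof.
intros hq hn; split; [apply exp_pos|].
destruct (Rlt_le_dec (Rpower q (/ INR n)) 1) as [hlt|hge]; [exact hlt|].
pose proof (pow_R1_Rle _ n hge) as hpow.
rewrite Rpower_root_pow in hpow by (lra || lia); lra.
Qed.

Lemma z_prime_bounds (a b : nat) :
  (1 <= a)%nat -> (a < b)%nat -> 0 < z_prime a b < 1.
Proof.
intros ha hab.
assert (0 < INR a) by (apply lt_0_INR; lia).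
assert (INR a < INR b) by (apply lt_INR; lia).
apply Rpower_root_bounds; [|lia].
split; [apply Rdiv_lt_0_compat; lra|].
unfold Rdiv; rewrite <- (Rinv_r (INR b)) by lra.
apply Rmult_lt_compat_r; [apply Rinv_0_lt_compat |]; lra.
Qed.

Lemma z_prime_pow (a b : nat) :
  (1 <= a)%nat -> (a < b)%nat -> z_prime a b ^ (b - a) = INR a / INR b.
Proof.
intros ha hab.
assert (0 < INR a) by (apply lt_0_INR; lia).
assert (INR a < INR b) by (apply lt_INR; lia).
apply Rpower_root_pow; [apply Rdiv_lt_0_compat; lra | lia].
Qed.

Lemma Z0_factor (a b : nat) (z : R) :
  (1 <= a)%nat -> (a < b)%nat ->
  Z_fun a b 0 z = INR b * z ^ (a - 1) * (z_prime a b ^ (b - a) - z ^ (b - a)).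
Proof.
intros ha hab.
assert (INR b <> 0) by (apply not_0_INR; lia).
rewrite z_prime_pow by assumption.
unfold Z_fun.
replace (b - 1)%nat with ((a - 1) + (b - a))%nat by lia.
rewrite pow_add; simpl; field; assumption.
Qed.

Lemma Z0_pos_below (a b : nat) (z : R) :
  (1 <= a)%nat -> (a < b)%nat -> 0 < z < z_prime a b -> 0 < Z_fun a b 0 z.
Proof.
intros ha hab hz.
assert (0 < INR b) by (apply lt_0_INR; lia).
assert (0 < z ^ (a - 1)) by (apply pow_lt; lra).
assert (z ^ (b - a) < z_prime a b ^ (b - a)) by (apply pow_lt_compat; lra || lia).
rewrite Z0_factor by assumption.
repeat apply Rmult_lt_0_compat; lra.
Qed.

Lemma Z0_neg_above (a b : nat) (z : R) :
  (1 <= a)%nat -> (a < b)%nat -> z_prime a b < z -> Z_fun a b 0 z < 0.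
Proof.
intros ha hab hz.
pose proof (z_prime_bounds a b ha hab).
assert (0 < INR b) by (apply lt_0_INR; lia).
assert (0 < z ^ (a - 1)) by (apply pow_lt; lra).
assert (z_prime a b ^ (b - a) < z ^ (b - a)) by (apply pow_lt_compat; lra || lia).
rewrite Z0_factor by assumption.
assert (0 < INR b * z ^ (a - 1)) by (apply Rmult_lt_0_compat; lra).
nra.
Qed.

Lemma sign_div_pos_factor (X G K : R) :
  0 < K -> 0 < X -> (X * G / K > 0 <-> G > 0).
Proof.
intros hK hX; unfold Rdiv.
assert (0 < / K) by (apply Rinv_0_lt_compat; lra).
assert (0 < X * / K) by (apply Rmult_lt_0_compat; lra).
replace (X * G * / K) with (X * / K * G) by ring.
split; intro h; nra.
Qed.

Lemma sign_div_neg_factor (X G K : R) :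
  0 < K -> X < 0 -> (X * G / K < 0 <-> G > 0).
Proof.
intros hK hX; unfold Rdiv.
assert (0 < / K) by (apply Rinv_0_lt_compat; lra).
assert (X * / K < 0) by nra.
replace (X * G * / K) with (X * / K * G) by ring.
split; intro h; nra.
Qed.

Theorem mainTheorem9 (a b : nat) (ha : (3 <= a)%nat) (hab : (a < b)%nat) :
  (forall z : R, 0 < z < z_prime a b ->
     exists l : R, derivable_pt_lim (Ttilde a b) z l /\ (l > 0 <-> g_fun a b z > 0)) /\
  (forall z : R, z_prime a b < z < 1 ->
     exists l : R, derivable_pt_lim (Ttilde a b) z l /\ (l < 0 <-> g_fun a b z > 0)).
Proof.
pose proof (z_prime_bounds a b ltac:(lia) hab) as hz'.
assert (hK : forall z, 0 < z < 1 -> 0 < (1 - z) * T_den a b z).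
{ intros z hz; apply Rmult_lt_0_compat; [lra | apply T_den_pos; lia || lra]. }
split; intros z hz; eexists; (split; [apply Ttilde_derivative; lia || lra |]).
- apply sign_div_pos_factor; [apply hK; lra | apply Z0_pos_below; lia || lra].
- apply sign_div_neg_factor; [apply hK; lra | apply Z0_neg_above; lia || lra].
Qed.
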